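(* For any integers $n\ge2$ and $1\le m\le (n-1)^2$, the Laplacian matrix $L(n,m)$ of $\mathbb G(n,m)$ satisfies $[L(n,m)]_{in}=0$ for every $i\in\{1,\dots,n-1\}$.
   Context: For integers $n\ge2$ and $0\le m\le n(n-1)$, $\mathbb G(n,m)$ is the simple directed graph on vertex set $\{1,\dots,n\}$ whose arc set is $\{(\lceil \frac{i}{n-1}\rceil,\ n-((i-1)\bmod n)) : i=1,\dots,m\}$, where an arc $(j,k)$ goes from $j$ to $k$ and $a\bmod b\in\{0,\dots,b-1\}$; these $m$ pairs are pairwise distinct pairs of distinct vertices. The (in-degree) Laplacian of a directed graph is $L=D-A$, $D$ the diagonal matrix of in-degrees, $A_{ij}=1$ if $(j,i)$ is an arc and $0$ otherwise; $[L]_{ij}$ denotes its $ij$th entry. *)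

From HB Require Import structures.
From mathcomp Require Import all_boot all_order all_algebra.
Set Implicit Arguments. Unset Strict Implicit. Unset Printing Implicit Defensive.
Import GRing.Theory Num.Theory.
Local Open Scope ring_scope.

Definition ceil_div (a b : nat) : nat := ((a + b - 1) %/ b)%N.

(* Vertices are 1..n (as nats).  The i-th arc (1 <= i <= m) of G(n,m) is
   (ceil(i/(n-1)), n - ((i-1) mod n)). *)
Definition Gtail (n i : nat) : nat := ceil_div i (n - 1)%N.
Definition Ghead (n i : nat) : nat := (n - ((i - 1) %% n))%N.

Definition is_arc (n m j k : nat) : bool :=
  has (fun i => (Gtail n i == j) && (Ghead n i == k)) (iota 1 m).

(* Adjacency matrix, with 0-based matrix indices i, j : 'I_n standing for
   vertices i+1, j+1:  A_ij = 1 iff (j,i) is an arc. *)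
Definition adjG (n m : nat) : 'M[int]_n :=
  \matrix_(i < n, j < n) (is_arc n m j.+1 i.+1)%:R.

Definition indegG (n m : nat) (i : 'I_n) : int := \sum_(j < n) adjG n m i j.
Arguments indegG : clear implicits.

Definition laplacianG (n m : nat) : 'M[int]_n :=
  (\matrix_(i < n, j < n) ((i == j)%:R * indegG n m i)) - adjG n m.

From mathcomp Require Import all_boot all_order all_algebra.
From mathcomp Require Import zify.
Import GRing.Theory.

(* The arcs are listed by tail, [n-1] at a time, so the first [m] arcs all
   leave vertices at most [ceil(m/(n-1))]; when [m <= (n-1)^2] this is at most
   [n-1], so vertex [n] has no out-arc and column [n] of [A] is zero.  Column
   [n] of [D] vanishes off the diagonal anyway. *)

Lemma leq_ceil_div2r (a a' b : nat) : (a <= a')%N -> (ceil_div a b <= ceil_div a' b)%N.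
Proof. by move=> le_aa'; rewrite leq_div2r // !leq_sub2r // leq_add2r. Qed.

Lemma ceil_div_le (a b k : nat) : (0 < b)%N -> (a <= k * b)%N -> (ceil_div a b <= k)%N.
Proof. by move=> b_gt0 le_akb; rewrite /ceil_div -ltnS ltn_divLR //; lia. Qed.

Lemma is_arc_tail_le (n m j k : nat) :
  is_arc n m j k -> (j <= ceil_div m (n - 1))%N.
Proof.
case/hasP=> i; rewrite mem_iota => /andP[_ lt_im] /andP[/eqP <- _].
by apply: leq_ceil_div2r; rewrite -ltnS -(addn1 m) addnC.
Qed.

Lemma is_arc_from_last (n m k : nat) :
  (2 <= n)%N -> (m <= (n - 1) ^ 2)%N -> is_arc n m n k = false.
Proof.
move=> n_ge2 m_le; apply/negbTE/negP => /is_arc_tail_le le_n.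
have : (ceil_div m (n - 1) <= n - 1)%N by apply: ceil_div_le; rewrite ?mulnn; lia.
lia.
Qed.

Lemma laplacianG_offdiag (n m : nat) (i j : 'I_n) :
  i != j -> laplacianG n m i j = (- (is_arc n m j.+1 i.+1)%:R)%R.
Proof. by move/negbTE=> ne_ij; rewrite !mxE ne_ij mul0r add0r. Qed.

(* Matrix index i : 'I_n stands for vertex i+1; so i < n-1 means vertex
   i+1 in {1,...,n-1}, and the column index j with j = n-1 is vertex n. *)
Theorem lemma15 (n m : nat) :
  (2 <= n)%N -> (1 <= m)%N -> (m <= (n - 1) ^ 2)%N ->
  forall i j : 'I_n, (i < n - 1)%N -> (j : nat) = (n - 1)%N ->
    laplacianG n m i j = 0%R.
Proof.
move=> n_ge2 _ m_le i j lt_i j_last.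
have ne_ij : i != j by apply/eqP=> eq_ij; move: lt_i; rewrite eq_ij j_last ltnn.
rewrite laplacianG_offdiag //.
have -> : j.+1 = n by lia.
by rewrite is_arc_from_last.
Qed.
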